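(* Let $n \geq 0$ be an integer. Then the value $H_0(2a-n, a)$ is the same for all integers $a \geq 2n$.
   Context: For a finite poset, the Hasse diagram is the directed graph on its points whose arcs are the covering pairs $x \to y$ ($x<y$ with no $w$ satisfying $x<w<y$). Posets are counted up to isomorphism (unlabeled). $H_0(p,a)$ is the number of isomorphism classes of posets with $p$ points and exactly $a$ arcs in the Hasse diagram that have no isolated points (an isolated point is a point incident to no arc of the Hasse diagram). By convention the empty poset is counted, so $H_0(0,0) = 1$. *)

From mathcomp Require Import all_boot all_fingroup.
Set Implicit Arguments. Unset Strict Implicit. Unset Printing Implicit Defensive.

Definition prel (p : nat) := {ffun 'I_p * 'I_p -> bool}.

Definition le_of (p : nat) (r : prel p) (x y : 'I_p) : bool := r (x, y).

Definition is_poset (p : nat) (r : prel p) : bool :=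
  [&& [forall x, le_of r x x],
      [forall x, forall y, (le_of r x y && le_of r y x) ==> (x == y)] &
      [forall x, forall y, forall z,
         (le_of r x y && le_of r y z) ==> le_of r x z]].

Definition lt_of (p : nat) (r : prel p) (x y : 'I_p) : bool :=
  (x != y) && le_of r x y.

Definition covers (p : nat) (r : prel p) (x y : 'I_p) : bool :=
  lt_of r x y && ~~ [exists w, lt_of r x w && lt_of r w y].

Definition n_arcs (p : nat) (r : prel p) : nat :=
  #|[set xy : 'I_p * 'I_p | covers r xy.1 xy.2]|.

Definition no_isolated (p : nat) (r : prel p) : bool :=
  [forall x, exists y, covers r x y || covers r y x].

Definition H0_labelled (p a : nat) : {set prel p} :=
  [set r : prel p | [&& is_poset r, n_arcs r == a & no_isolated r]].

Definition poset_iso (p : nat) (r r' : prel p) : bool :=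
  [exists s : {perm 'I_p}, forall x, forall y, le_of r x y == le_of r' (s x) (s y)].

Definition H0 (p a : nat) : nat :=
  #|[set [set r' in H0_labelled p a | poset_iso r r'] | r in H0_labelled p a]|.

From mathcomp Require Import all_boot all_fingroup.
From mathcomp Require Import zify.
Set Implicit Arguments. Unset Strict Implicit. Unset Printing Implicit Defensive.

(* Adding a disjoint 2-element chain sends posets with p points, a Hasse arcs
   and no isolated point to posets with p + 2 points and a + 1 arcs, and it is
   injective on isomorphism classes: an isomorphism between two extended posets
   can be composed with an automorphism exchanging two isolated 2-chains so as
   to fix the added chain.  It is also onto isomorphism classes when 3a <= 2p.
   Indeed, every point of a target Hasse diagram has degree >= 1; if no arc had
   two ends of degree 1, the points of degree 1 would inject into the arcs, so
   2(p + 2) <= (sum of degrees) + #(points of degree 1) <= 2(a + 1) + (a + 1).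
   Hence some arc is a whole component, i.e. an isolated 2-chain, and removing
   it gives a preimage.
   For p = 2a - n the condition 3a <= 2p reads a >= 2n, so H_0(2a - n, a) is
   constant from a = 2n on. *)

Section CardImset.
Variables (T U V : finType) (D : {set T}) (f : T -> U) (g : T -> V).

Lemma leq_card_imset_kernel :
  {in D &, forall x y, f x = f y -> g x = g y} -> #|g @: D| <= #|f @: D|.
Proof.
move=> fg; have [-> | [x0 Dx0]] := set_0Vmem D; first by rewrite !imset0 cards0.
pose k u := g (odflt x0 [pick x in D | f x == u]).
suff -> : g @: D = k @: (f @: D) by exact: leq_imset_card.
rewrite -imset_comp; apply: eq_in_imset => x Dx; rewrite /k /=.
case: pickP => [y /andP[Dy /eqP fyx] | /(_ x)]; first exact: fg.
by rewrite Dx eqxx.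
Qed.

End CardImset.

Lemma card_imset_kernel (T U V : finType) (D : {set T}) (f : T -> U) (g : T -> V) :
  {in D &, forall x y, (f x == f y) = (g x == g y)} -> #|f @: D| = #|g @: D|.
Proof.
move=> fg; apply/eqP; rewrite eqn_leq; apply/andP; split.
  by apply: leq_card_imset_kernel => x y Dx Dy /eqP; rewrite -fg // => /eqP.
by apply: leq_card_imset_kernel => x y Dx Dy /eqP; rewrite fg // => /eqP.
Qed.

Section EquivalenceClasses.
Variables (T : finType) (e : rel T) (D : {set T}).
Hypothesis e_equiv : equivalence_rel e.

Lemma eq_equivalence_class x y : x \in D -> y \in D ->
  ([set z in D | e x z] == [set z in D | e y z]) = e x y.
Proof.
move=> Dx Dy; apply/eqP/idP => [exy | eqxy].
  have : y \in [set z in D | e y z] by rewrite inE Dy (e_equiv y y y).1.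
  by rewrite -exy inE => /andP[].
by apply/setP => z; rewrite !inE ((e_equiv x y z).2 eqxy).
Qed.

End EquivalenceClasses.

Lemma card_equivalence_partition_transfer (T U : finType) (eT : rel T)
    (eU : rel U) (D : {set T}) (E : {set U}) (f : T -> U) :
  equivalence_rel eT -> equivalence_rel eU ->
  {in D, forall x, f x \in E} ->
  {in D &, forall x y, eU (f x) (f y) = eT x y} ->
  {in E, forall y, exists2 x, x \in D & eU y (f x)} ->
  #|equivalence_partition eT D| = #|equivalence_partition eU E|.
Proof.
move=> eqT eqU fDE f_iso f_surj.
have -> : equivalence_partition eU E = (fun x => [set z in E | eU (f x) z]) @: D.
  apply/setP => C; apply/imsetP/imsetP => [[y Ey ->] | [x Dx ->]].
    have [x Dx eyx] := f_surj y Ey; exists x => //.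
    by apply/eqP; rewrite eq_equivalence_class ?fDE.
  by exists (f x); rewrite ?fDE.
apply: card_imset_kernel => x y Dx Dy.
by rewrite !eq_equivalence_class ?fDE ?f_iso.
Qed.

Definition pullback p q (f : 'I_p -> 'I_q) (r : prel q) : prel p :=
  [ffun xy => r (f xy.1, f xy.2)].

Lemma le_pullback p q (f : 'I_p -> 'I_q) r x y :
  le_of (pullback f r) x y = le_of r (f x) (f y).
Proof. by rewrite /le_of ffunE. Qed.

Lemma pullback_permM p (s t : {perm 'I_p}) r :
  pullback s (pullback t r) = pullback (s * t)%g r.
Proof. by apply/ffunP => xy; rewrite !ffunE !permM. Qed.

Lemma pullback_perm1 p (r : prel p) : pullback (1%g : {perm 'I_p}) r = r.
Proof. by apply/ffunP => -[x y]; rewrite ffunE !perm1. Qed.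

Section PosetIso.
Variable p : nat.
Implicit Types r : prel p.

Lemma poset_isoP r r' :
  reflect (exists s : {perm 'I_p}, r = pullback s r') (poset_iso r r').
Proof.
apply: (iffP existsP) => -[s rs]; exists s.
  by apply/ffunP => -[x y]; rewrite ffunE; apply/eqP/(forallP (forallP rs x) y).
by apply/forallP => x; apply/forallP => y; rewrite rs le_pullback.
Qed.

Lemma poset_iso_pullback (s : {perm 'I_p}) r : poset_iso (pullback s r) r.
Proof. by apply/poset_isoP; exists s. Qed.

Lemma poset_iso_sym r r' : poset_iso r r' -> poset_iso r' r.
Proof.
case/poset_isoP => s ->; apply/poset_isoP; exists s^-1%g.
by rewrite pullback_permM mulVg pullback_perm1.
Qed.

Lemma poset_iso_equiv : equivalence_rel (@poset_iso p).
Proof.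
have iso_trans r1 r2 r3 : poset_iso r1 r2 -> poset_iso r2 r3 -> poset_iso r1 r3.
  case/poset_isoP => s -> /poset_isoP[t ->].
  by rewrite pullback_permM poset_iso_pullback.
move=> r1 r2 r3; split; first by rewrite -{1}(pullback_perm1 r3) poset_iso_pullback.
move=> i12; apply/idP/idP => [i13 | i23]; first exact: iso_trans (poset_iso_sym i12) i13.
exact: iso_trans i12 i23.
Qed.

End PosetIso.

Lemma posetP p (r : prel p) :
  reflect [/\ reflexive (le_of r), antisymmetric (le_of r) & transitive (le_of r)]
          (is_poset r).
Proof.
apply: (iffP and3P) => [[/forallP refl /forallP anti /forallP trans] | [refl anti trans]].
  split=> // [x y /andP[xy yx] | y x z xy yz].
    by apply/eqP/(implyP (forallP (anti x) y)); rewrite xy.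
  by apply/(implyP (forallP (forallP (trans x) y) z)); rewrite xy.
split; apply/forallP => x; first exact: refl.
  by apply/forallP => y; apply/implyP => /anti ->.
by do 2 apply/forallP => ?; apply/implyP => /andP[]; apply: trans.
Qed.

Lemma pullback_poset p q (f : 'I_p -> 'I_q) (r : prel q) :
  injective f -> is_poset r -> is_poset (pullback f r).
Proof.
move=> f_inj /posetP[refl anti trans]; apply/posetP.
split=> [x | x y | y x z]; rewrite ?le_pullback //; last exact: trans.
by move/anti/f_inj.
Qed.

Section PosetLt.
Variables (p : nat) (r : prel p).
Hypothesis r_poset : is_poset r.

Lemma lt_of_irr : irreflexive (lt_of r).
Proof. by move=> x; rewrite /lt_of eqxx. Qed.

Lemma lt_of_trans : transitive (lt_of r).
Proof.
have [_ anti trans] := posetP _ r_poset.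
move=> y x z /andP[xy lxy] /andP[yz lyz]; rewrite /lt_of (trans y) // andbT.
by apply: contra_neq xy => exz; apply: anti; rewrite lxy exz.
Qed.

End PosetLt.

Section PullbackPerm.
Variables (p : nat) (s : {perm 'I_p}) (r : prel p).

Lemma lt_pullback x y : lt_of (pullback s r) x y = lt_of r (s x) (s y).
Proof. by rewrite /lt_of le_pullback (inj_eq perm_inj). Qed.

Lemma covers_pullback x y : covers (pullback s r) x y = covers r (s x) (s y).
Proof.
rewrite /covers lt_pullback; congr (_ && ~~ _); apply/existsP/existsP => -[w].
  by rewrite !lt_pullback; exists (s w).
by rewrite -[w](permKV s) -!lt_pullback; exists (s^-1 w)%g.
Qed.

Lemma n_arcs_pullback : n_arcs (pullback s r) = n_arcs r.
Proof.
have s2_inj : injective (fun xy : 'I_p * 'I_p => (s xy.1, s xy.2)).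
  by move=> [x y] [x' y'] /= [/perm_inj -> /perm_inj ->].
rewrite /n_arcs -[RHS](card_preimset _ s2_inj).
by apply: eq_card => -[x y]; rewrite !inE covers_pullback.
Qed.

Lemma no_isolated_pullback : no_isolated r -> no_isolated (pullback s r).
Proof.
move=> /forallP r_noiso; apply/forallP => x; have /existsP[y xy] := r_noiso (s x).
by apply/existsP; exists (s^-1 y)%g; rewrite !covers_pullback permKV.
Qed.

Lemma pullback_H0 a : r \in H0_labelled p a -> pullback s r \in H0_labelled p a.
Proof.
rewrite !inE n_arcs_pullback => /and3P[r_poset -> /no_isolated_pullback ->].
by rewrite pullback_poset //; apply: perm_inj.
Qed.

End PullbackPerm.

Section StrictOrderCover.
Variables (T : finType) (lt : rel T).
Hypotheses (lt_irr : irreflexive lt) (lt_trans : transitive lt).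

Lemma exists_cover_between x z : lt x z ->
  exists2 w, lt x w && ~~ [exists v, lt x v && lt v w] & (w == z) || lt w z.
Proof.
move=> xz; pose inside w := [set v | lt x v && lt v w].
pose upto_z w := lt x w && ((w == z) || lt w z).
have upto_z_z : upto_z z by rewrite /upto_z xz eqxx.
(* A [w] in (x, z] with the fewest points strictly between [x] and [w] covers [x]. *)
case: (arg_minnP (fun w => #|inside w|) upto_z_z) => w /andP[xw wz] w_min.
exists w => //; rewrite xw /=; apply/existsP => -[v /andP[xv vw]].
have vz : (v == z) || lt v z.
  by case/orP: wz => [/eqP <- | /(lt_trans vw) ->]; rewrite ?vw orbT.
have := w_min v; rewrite /upto_z xv vz => /(_ isT); apply/negP; rewrite -ltnNge.
apply: proper_card; apply/properP; split.
  by apply/subsetP => u; rewrite !inE => /andP[-> /lt_trans ->].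
by exists v; rewrite !inE ?xv ?vw // lt_irr andbF.
Qed.

End StrictOrderCover.

Section PosetCovers.
Variables (q : nat) (R : prel q).
Hypothesis R_poset : is_poset R.

Lemma lt_ofW x y : lt_of R x y -> le_of R x y.
Proof. by case/andP. Qed.

Lemma le_of_refl : reflexive (le_of R).
Proof. by have [] := posetP _ R_poset. Qed.

Lemma le_of_eqVlt x y : (x == y) || lt_of R x y -> le_of R x y.
Proof. by case/orP=> [/eqP -> | /lt_ofW //]; apply: le_of_refl. Qed.

Lemma exists_cover_above x z : lt_of R x z -> exists2 w, covers R x w & le_of R w z.
Proof.
case/(exists_cover_between (lt_of_irr R) (lt_of_trans R_poset)) => w xw wz.
by exists w => //; apply: le_of_eqVlt.
Qed.

Lemma exists_cover_below x z : lt_of R z x -> exists2 w, covers R w x & le_of R z w.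
Proof.
have lt_irr : irreflexive (fun a b => lt_of R b a) by move=> a; apply: lt_of_irr.
have lt_trans : transitive (fun a b => lt_of R b a).
  by move=> y a c ya cy; apply: (lt_of_trans R_poset) ya.
case/(exists_cover_between lt_irr lt_trans) => w /andP[wx no_mid] zw.
exists w; last by apply: le_of_eqVlt; rewrite eq_sym.
rewrite /covers wx; apply: contra no_mid => /existsP[v /andP[wv vx]].
by apply/existsP; exists v; rewrite wv vx.
Qed.

Lemma minimal_of_no_lower_cover x :
  (forall w, ~~ covers R w x) -> forall z, le_of R z x = (z == x).
Proof.
move=> no_cover z; apply/idP/eqP => [zx | ->]; last exact: le_of_refl.
apply/eqP; apply: contraT => z_neq_x.
have [w wx _] := exists_cover_below (introT andP (conj z_neq_x zx)).
by have := no_cover w; rewrite wx.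
Qed.

Lemma maximal_of_no_upper_cover x :
  (forall w, ~~ covers R x w) -> forall z, le_of R x z = (z == x).
Proof.
move=> no_cover z; apply/idP/eqP => [xz | ->]; last exact: le_of_refl.
apply/eqP; apply: contraT; rewrite eq_sym => x_neq_z.
have [w xw _] := exists_cover_above (introT andP (conj x_neq_z xz)).
by have := no_cover w; rewrite xw.
Qed.

Lemma le_of_unique_upper_cover x y :
  (forall w, covers R x w -> w = y) -> forall z, le_of R x z -> (z == x) || le_of R y z.
Proof.
move=> cover_y z xz; case: (eqVneq z x) => //= z_neq_x.
rewrite eq_sym in z_neq_x.
by have [w /cover_y ->] := exists_cover_above (introT andP (conj z_neq_x xz)).
Qed.

Lemma le_of_unique_lower_cover x y :
  (forall w, covers R w y -> w = x) -> forall z, le_of R z y -> (z == y) || le_of R z x.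
Proof.
move=> cover_x z zy; case: (eqVneq z y) => //= z_neq_y.
by have [w /cover_x ->] := exists_cover_below (introT andP (conj z_neq_y zy)).
Qed.

End PosetCovers.

(* [u0 < u1] is a connected component of the Hasse diagram of [R]. *)
Definition chain2_component q (R : prel q) (u0 u1 : 'I_q) : Prop :=
  u0 != u1 /\ forall x y, (x \in [:: u0; u1]) || (y \in [:: u0; u1]) ->
    le_of R x y = (x == y) || (x == u0) && (y == u1).

Section Chain2.
Variables (q : nat) (R : prel q).

Lemma chain2_pullback (s : {perm 'I_q}) u0 u1 :
  chain2_component (pullback s R) u0 u1 <-> chain2_component R (s u0) (s u1).
Proof.
have mem_s x u v : (s x \in [:: s u; s v]) = (x \in [:: u; v]).
  by rewrite !inE !(inj_eq perm_inj).
rewrite /chain2_component (inj_eq perm_inj).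
split=> -[u01 chain]; split=> // x y.
  rewrite -[x](permKV s) -[y](permKV s) !mem_s -le_pullback => /chain->.
  by rewrite !(inj_eq perm_inj).
by move=> xy; rewrite le_pullback chain ?mem_s // !(inj_eq perm_inj).
Qed.

Lemma chain2_cross_neq u0 u1 v0 v1 :
  chain2_component R u0 u1 -> chain2_component R v0 v1 -> u1 != v0.
Proof.
move=> [u01 Cu] [v01 Cv]; apply/eqP => u1v0.
have : le_of R u0 u1 by rewrite Cu ?inE !eqxx ?orbT.
by rewrite u1v0 Cv ?inE ?eqxx ?orbT //= -u1v0 (negbTE u01).
Qed.

Lemma chain2_transfer (s : {perm 'I_q}) u0 u1 v0 v1 x y :
  chain2_component R u0 u1 -> chain2_component R v0 v1 ->
  s u0 = v0 -> s u1 = v1 -> (x \in [:: u0; u1]) || (y \in [:: u0; u1]) ->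
  le_of R (s x) (s y) = le_of R x y.
Proof.
move=> [_ Cu] [_ Cv] su0 su1 xy_u; subst v0 v1.
rewrite (Cu x y xy_u) Cv ?(inj_eq perm_inj) //.
by move: xy_u; rewrite !inE !(inj_eq perm_inj) -!orbA.
Qed.

Lemma chain2_swap u0 u1 v0 v1 :
  chain2_component R u0 u1 -> chain2_component R v0 v1 ->
  exists s : {perm 'I_q}, [/\ R = pullback s R, s u0 = v0 & s u1 = v1].
Proof.
move=> Cu Cv; have [u01 _] := Cu; have [v01 _] := Cv.
have u1v0 := chain2_cross_neq Cu Cv; have v1u0 := chain2_cross_neq Cv Cu.
(* The two components are equal or disjoint; either way [s] exchanges them. *)
pose s := (tperm u0 v0 * tperm u1 v1)%g.
have su0 : s u0 = v0 by rewrite permM tpermL tpermD // eq_sym.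
have su1 : s u1 = v1 by rewrite permM (@tpermD _ u0 v0 u1) ?tpermL // eq_sym.
have sv0 : s v0 = u0 by rewrite permM tpermR tpermD // eq_sym.
have sv1 : s v1 = u1 by rewrite permM (@tpermD _ u0 v0 v1) ?tpermR // eq_sym.
exists s; split=> //; apply/ffunP => -[x y].
change (le_of R x y = le_of (pullback s R) x y); rewrite le_pullback.
have [xy_u | /norP[x_u y_u]] := boolP ((x \in [:: u0; u1]) || (y \in [:: u0; u1])).
  by rewrite (chain2_transfer Cu Cv).
have [xy_v | /norP[x_v y_v]] := boolP ((x \in [:: v0; v1]) || (y \in [:: v0; v1])).
  by rewrite (chain2_transfer Cv Cu).
have s_fix z : z \notin [:: u0; u1] -> z \notin [:: v0; v1] -> s z = z.
  by rewrite !inE => /norP[? ?] /norP[? ?]; rewrite permM !tpermD // eq_sym.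
by rewrite !s_fix.
Qed.

End Chain2.

Lemma card_set_sum (U : finType) (A : {pred U}) (P : pred U) :
  #|[set u in A | P u]| = \sum_(u in A) P u.
Proof. by rewrite -sum1dep_card big_mkcondr; apply: eq_bigr => u _; case: (P u). Qed.

Section EdgeCounting.
Variables (T : finType) (E : {set T * T}).

Definition incident (x : T) (e : T * T) := (e.1 == x) || (e.2 == x).

Definition degree x := #|[set e in E | incident x e]|.

Lemma sum_degree_in (A : {pred T}) :
  \sum_(x in A) degree x = \sum_(e in E) #|[set x in A | incident x e]|.
Proof.
under eq_bigr => x _ do rewrite /degree card_set_sum.
by rewrite exchange_big; apply: eq_bigr => e _; rewrite card_set_sum.
Qed.

Hypothesis E_loopless : {in E, forall e, e.1 != e.2}.

Lemma sum_degree : \sum_x degree x = 2 * #|E|.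
Proof.
transitivity (\sum_(e in E) #|[set x in T | incident x e]|); first exact: sum_degree_in.
rewrite -sum1_card big_distrr /=; apply: eq_bigr => e eE.
have -> : [set x in T | incident x e] = [set e.1; e.2].
  by apply/setP => x; rewrite !inE /incident !(eq_sym x).
by rewrite cards2 E_loopless.
Qed.

Lemma exists_isolated_edge : (forall x, 0 < degree x) -> 3 * #|E| < 2 * #|T| ->
  exists2 e, e \in E & (degree e.1 <= 1) && (degree e.2 <= 1).
Proof.
move=> deg_gt0 ltET; apply/exists_inP; apply: contraLR ltET => /exists_inPn no_leaf_edge.
pose leaves := [set x | degree x <= 1].
have leaves_le : #|leaves| <= #|E|.
  apply: (@leq_trans (\sum_(x in leaves) degree x)).
    by rewrite -sum1_card; apply: leq_sum => x _; apply: deg_gt0.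
  rewrite sum_degree_in -sum1_card; apply: leq_sum => e eE.
  apply/card_le1_eqP => x y; rewrite !inE /incident.
  move=> /andP[lx /orP[] /eqP ex] /andP[ly /orP[] /eqP ey]; subst x y => //;
    by have := no_leaf_edge e eE; rewrite lx ly.
have : 2 * #|T| <= \sum_x degree x + #|leaves|.
  have -> : 2 * #|T| = \sum_(x in T) 2 by rewrite sum_nat_const mulnC.
  rewrite /leaves -sum1dep_card [X in _ + X]big_mkcond -big_split /=.
  apply: leq_sum => x _.
  by have := deg_gt0 x; case: (degree x) => [|[|k]].
by rewrite sum_degree; lia.
Qed.

End EdgeCounting.

Section IsolatedCover.
Variables (q : nat) (R : prel q).
Hypothesis R_poset : is_poset R.

Lemma isolated_cover_chain2 x y : covers R x y ->
  (forall u v, covers R u v -> incident x (u, v) || incident y (u, v) -> (u, v) = (x, y)) ->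
  chain2_component R x y.
Proof.
move=> cxy isolated; have /andP[x_neq_y lxy] : lt_of R x y by case/andP: cxy.
have arc u v : covers R u v -> incident x (u, v) || incident y (u, v) -> u = x /\ v = y.
  by move=> c m; case: (isolated u v c m).
have below_x z : le_of R z x = (z == x).
  apply: (minimal_of_no_lower_cover R_poset) => w; apply/negP => /arc.
  by rewrite /incident /= eqxx orbT; case=> // _ xy; rewrite xy eqxx in x_neq_y.
have above_y z : le_of R y z = (z == y).
  apply: (maximal_of_no_upper_cover R_poset) => w; apply/negP => /arc.
  by rewrite /incident /= eqxx !orbT; case=> // yx _; rewrite yx eqxx in x_neq_y.
have above_x z : le_of R x z = (z == x) || (z == y).
  apply/idP/idP => [xz | /orP[] /eqP -> //]; last exact: le_of_refl.
  rewrite -above_y; apply: le_of_unique_upper_cover xz => // w /arc.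
  by rewrite /incident /= eqxx => -[].
have below_y z : le_of R z y = (z == x) || (z == y).
  apply/idP/idP => [zy | /orP[] /eqP -> //]; last exact: le_of_refl.
  rewrite orbC -below_x; apply: le_of_unique_lower_cover zy => // w /arc.
  by rewrite /incident /= eqxx !orbT => -[].
split=> // u v; rewrite !inE => /orP[/orP[] | /orP[]] /eqP ->.
- by rewrite above_x eqxx eq_sym.
- by rewrite above_y eq_sym [y == x]eq_sym (negbTE x_neq_y) orbF.
- by rewrite below_x; case: (u == x).
- by rewrite below_y eqxx andbT orbC.
Qed.

End IsolatedCover.

Lemma exists_chain2_component q (R : prel q) :
  is_poset R -> no_isolated R -> 3 * n_arcs R < 2 * q ->
  exists x y, chain2_component R x y.
Proof.
move=> R_poset /forallP R_noiso arcs_lt.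
pose E := [set xy : 'I_q * 'I_q | covers R xy.1 xy.2].
have E_loopless : {in E, forall e, e.1 != e.2} by move=> e; rewrite inE => /andP[/andP[]].
have deg_gt0 x : 0 < degree E x.
  have /existsP[y /orP[xy | yx]] := R_noiso x; apply/card_gt0P.
    by exists (x, y); rewrite !inE /incident eqxx xy.
  by exists (y, x); rewrite !inE /incident eqxx yx orbT.
have E_small : 3 * #|E| < 2 * #|'I_q| by rewrite card_ord.
have [[x y] xyE /andP[deg_x deg_y]] := exists_isolated_edge E_loopless deg_gt0 E_small.
have only_arc z : degree E z <= 1 -> incident z (x, y) ->
    forall e, e \in E -> incident z e -> e = (x, y).
  move=> /card_le1_eqP deg_z zxy e eE ze.
  by apply: deg_z; rewrite inE ?eE ?xyE.
exists x, y; apply: isolated_cover_chain2; rewrite ?inE in xyE => // u v uv.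
have uvE : (u, v) \in E by rewrite inE.
by case/orP; apply: only_arc; rewrite /incident ?eqxx ?orbT.
Qed.

Lemma exists_perm2 (T : finType) (x y x' y' : T) :
  x != y -> x' != y' -> exists s : {perm T}, s x = x' /\ s y = y'.
Proof.
move=> xy x'y'; exists (tperm x x' * tperm (tperm x x' y) y')%g.
split; last by rewrite permM tpermL.
have yx' : tperm x x' y != x'.
  by rewrite -[x' in _ != x'](tpermL x x') (inj_eq perm_inj) eq_sym.
by rewrite permM tpermL tpermD // eq_sym.
Qed.

Lemma ord2_cases (j : 'I_2) : j = ord0 \/ j = ord_max.
Proof. by case: j => [[|[|//]]] ?; [left | right]; apply: val_inj. Qed.

Section AddChain2.
Variable p : nat.
Local Notation L := (@lshift p 2).
Local Notation N := (@rshift p 2).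
Local Notation N0 := (N ord0).
Local Notation N1 := (N ord_max).
Implicit Types r : prel p.

Definition add_chain2 r : prel (p + 2) :=
  [ffun xy => match split xy.1, split xy.2 with
              | inl i, inl j => r (i, j)
              | inr i, inr j => (i <= j)%N
              | _, _ => false
              end].

Lemma le_add_chain2_LL r i j : le_of (add_chain2 r) (L i) (L j) = le_of r i j.
Proof. by rewrite /le_of ffunE /= !(unsplitK (inl _)). Qed.

Lemma le_add_chain2_LN r i j : le_of (add_chain2 r) (L i) (N j) = false.
Proof. by rewrite /le_of ffunE /= (unsplitK (inl _)) (unsplitK (inr _)). Qed.

Lemma le_add_chain2_NL r i j : le_of (add_chain2 r) (N j) (L i) = false.
Proof. by rewrite /le_of ffunE /= (unsplitK (inl _)) (unsplitK (inr _)). Qed.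

Lemma le_add_chain2_NN r i j : le_of (add_chain2 r) (N i) (N j) = (i <= j)%N.
Proof. by rewrite /le_of ffunE /= !(unsplitK (inr _)). Qed.

Let le_add_chain2E :=
  (le_add_chain2_LL, le_add_chain2_LN, le_add_chain2_NL, le_add_chain2_NN).

Section AddChain2Props.
Variable r : prel p.

Lemma add_chain2K : pullback L (add_chain2 r) = r.
Proof. by apply/ffunP => -[i j]; rewrite -[LHS]/(le_of _ i j) le_pullback le_add_chain2E. Qed.

Lemma add_chain2_poset : is_poset (add_chain2 r) = is_poset r.
Proof.
apply/idP/idP => [ext_poset | /posetP[refl anti trans]].
  by rewrite -add_chain2K pullback_poset //; apply: lshift_inj.
apply/posetP; split.
- by move=> x; case: (split_ordP x) => [i|j] ->; rewrite le_add_chain2E.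
- move=> x y; case: (split_ordP x) => [i|j] ->; case: (split_ordP y) => [k|l] ->;
    rewrite ?le_add_chain2E ?andbF //.
    by move/anti ->.
  by move/anti_leq/val_inj ->.
- move=> y x z; case: (split_ordP x) => [i|j] ->; case: (split_ordP y) => [k|l] ->;
    case: (split_ordP z) => [m|o] ->; rewrite ?le_add_chain2E //; [exact: trans | exact: leq_trans].
Qed.

Lemma lt_add_chain2_LL i j : lt_of (add_chain2 r) (L i) (L j) = lt_of r i j.
Proof. by rewrite /lt_of le_add_chain2E (inj_eq (@lshift_inj _ _)). Qed.

Lemma covers_add_chain2_LL i j : covers (add_chain2 r) (L i) (L j) = covers r i j.
Proof.
rewrite /covers lt_add_chain2_LL; congr (_ && ~~ _); apply/existsP/existsP => -[w].
  case: (split_ordP w) => [k|l] ->; last by rewrite /lt_of le_add_chain2E andbF.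
  by rewrite !lt_add_chain2_LL; exists k.
by rewrite -!lt_add_chain2_LL; exists (L w).
Qed.

Lemma covers_add_chain2_LN i j : covers (add_chain2 r) (L i) (N j) = false.
Proof. by rewrite /covers /lt_of le_add_chain2E andbF. Qed.

Lemma covers_add_chain2_NL i j : covers (add_chain2 r) (N j) (L i) = false.
Proof. by rewrite /covers /lt_of le_add_chain2E andbF. Qed.

Lemma covers_add_chain2_NN i j : covers (add_chain2 r) (N i) (N j) = (i < j)%N.
Proof.
rewrite /covers /lt_of le_add_chain2E (inj_eq (@rshift_inj p 2)) -ltn_neqAle.
case: ltnP => //= ij; apply/negP => /existsP[w].
case: (split_ordP w) => [k|l] ->; first by rewrite /lt_of le_add_chain2E andbF.
rewrite /lt_of !le_add_chain2E !(inj_eq (@rshift_inj p 2)) -!ltn_neqAle.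
move: ij; case: (ord2_cases i) => ->; case: (ord2_cases j) => ->;
  by case: (ord2_cases l) => ->.
Qed.

Let covers_add_chain2E := (covers_add_chain2_LL, covers_add_chain2_LN,
  covers_add_chain2_NL, covers_add_chain2_NN).

Lemma n_arcs_add_chain2 : n_arcs (add_chain2 r) = (n_arcs r).+1.
Proof.
pose LL (xy : 'I_p * 'I_p) := (L xy.1, L xy.2).
have LL_inj : injective LL by move=> [x y] [x' y'] [/val_inj -> /val_inj ->].
have N_notin1 j y : (N j, y) \notin LL @: [set xy | covers r xy.1 xy.2].
  by apply/imsetP => -[[u v] _ /eqP]; rewrite xpair_eqE eq_rlshift.
have N_notin2 x j : (x, N j) \notin LL @: [set xy | covers r xy.1 xy.2].
  by apply/imsetP => -[[u v] _ /eqP]; rewrite xpair_eqE eq_rlshift andbF.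
rewrite /n_arcs; suff -> : [set xy | covers (add_chain2 r) xy.1 xy.2] =
          (N0, N1) |: LL @: [set xy | covers r xy.1 xy.2].
  by rewrite cardsU1 N_notin1 (card_imset _ LL_inj).
apply/setP => -[x y]; rewrite in_setU1 inE /=.
case: (split_ordP x) => [i|j] ->; case: (split_ordP y) => [k|l] ->;
  rewrite covers_add_chain2E xpair_eqE ?eq_lrshift ?eq_rlshift ?(negbTE (N_notin1 _ _))
          ?(negbTE (N_notin2 _ _)) ?andbF //=.
  by rewrite -[(L i, L k)]/(LL (i, k)) (mem_imset _ _ LL_inj) inE.
rewrite !(inj_eq (@rshift_inj p 2)).
by case: (ord2_cases j) => ->; case: (ord2_cases l) => ->.
Qed.

Lemma no_isolated_add_chain2 : no_isolated (add_chain2 r) = no_isolated r.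
Proof.
apply/forallP/forallP => iso x.
  apply/existsP; have /existsP[y] := iso (L x).
  case: (split_ordP y) => [k|l] ->; last by rewrite !covers_add_chain2E.
  by rewrite !covers_add_chain2E; exists k.
apply/existsP; case: (split_ordP x) => [i|j] ->.
  by have /existsP[y xy] := iso i; exists (L y); rewrite !covers_add_chain2E.
case: (ord2_cases j) => ->; first by exists N1; rewrite covers_add_chain2E.
by exists N0; rewrite !covers_add_chain2E orbT.
Qed.

Lemma add_chain2_H0 a :
  (add_chain2 r \in H0_labelled (p + 2) a.+1) = (r \in H0_labelled p a).
Proof. by rewrite !inE add_chain2_poset n_arcs_add_chain2 no_isolated_add_chain2 eqSS. Qed.

Lemma chain2_component_add_chain2 : chain2_component (add_chain2 r) N0 N1.
Proof.
split; first by rewrite (inj_eq (@rshift_inj p 2)).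
move=> x y; case: (split_ordP x) => [i|j] ->; case: (split_ordP y) => [k|l] ->;
  rewrite !inE ?le_add_chain2E ?eq_lrshift ?eq_rlshift ?andbF //=.
rewrite !(inj_eq (@rshift_inj p 2)).
by case: (ord2_cases j) => ->; case: (ord2_cases l) => ->.
Qed.

End AddChain2Props.

Lemma perm_extend_rshift (s : {perm 'I_p}) :
  exists t : {perm 'I_(p + 2)}, (forall i, t (L i) = L (s i)) /\ (forall j, t (N j) = N j).
Proof.
pose f x := if split x is inl i then L (s i) else x.
have fL i : f (L i) = L (s i) by rewrite /f (unsplitK (inl _)).
have fN j : f (N j) = N j by rewrite /f (unsplitK (inr _)).
have f_inj : injective f.
  move=> x y; case: (split_ordP x) => [i|j] ->; case: (split_ordP y) => [k|l] ->;
    rewrite ?fL ?fN => /eqP; rewrite ?eq_lrshift ?eq_rlshift // => /eqP.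
    by move/lshift_inj/perm_inj ->.
  by move/rshift_inj ->.
by exists (perm f_inj); split=> [i|j]; rewrite permE.
Qed.

Lemma perm_restrict_rshift (t : {perm 'I_(p + 2)}) : (forall j, t (N j) = N j) ->
  exists s : {perm 'I_p}, forall i, t (L i) = L (s i).
Proof.
move=> tN; pose g i := if split (t (L i)) is inl k then k else i.
have tL i : t (L i) = L (g i).
  rewrite /g; case: (split_ordP (t (L i))) => [k|j] e //.
  by move: (tN j); rewrite -{2}e => /perm_inj/eqP; rewrite eq_rlshift.
have g_inj : injective g.
  by move=> i k gik; apply/(@lshift_inj p 2)/(@perm_inj _ t); rewrite !tL gik.
by exists (perm g_inj) => i; rewrite permE.
Qed.

Lemma pullback_add_chain2 r (s : {perm 'I_p}) (t : {perm 'I_(p + 2)}) :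
  (forall i, t (L i) = L (s i)) -> (forall j, t (N j) = N j) ->
  pullback t (add_chain2 r) = add_chain2 (pullback s r).
Proof.
move=> tL tN; apply/ffunP => -[x y].
change (le_of (pullback t (add_chain2 r)) x y = le_of (add_chain2 (pullback s r)) x y).
rewrite le_pullback; case: (split_ordP x) => [i|j] ->; case: (split_ordP y) => [k|l] ->;
  by rewrite ?tL ?tN ?le_add_chain2E ?le_pullback.
Qed.

Lemma add_chain2_inj : injective add_chain2.
Proof. by move=> r1 r2 e; rewrite -(add_chain2K r1) e add_chain2K. Qed.

Lemma add_chain2_iso r1 r2 :
  poset_iso (add_chain2 r1) (add_chain2 r2) = poset_iso r1 r2.
Proof.
apply/poset_isoP/poset_isoP => -[t r1t]; last first.
  have [u [uL uN]] := perm_extend_rshift t.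
  by exists u; rewrite r1t (pullback_add_chain2 _ uL uN).
have C1 := chain2_component_add_chain2 r1; have C2 := chain2_component_add_chain2 r2.
rewrite r1t in C1; move/chain2_pullback in C1.
have [w [w_aut w0 w1]] := chain2_swap C1 C2.
have tw_N j : (t * w)%g (N j) = N j by case: (ord2_cases j) => ->; rewrite permM.
have [s tw_L] := perm_restrict_rshift tw_N.
exists s; apply: add_chain2_inj.
by rewrite r1t {1}w_aut pullback_permM (pullback_add_chain2 _ tw_L tw_N).
Qed.

Lemma pullback_lshiftK (R : prel (p + 2)) :
  chain2_component R N0 N1 -> add_chain2 (pullback L R) = R.
Proof.
move=> [_ CR]; have [_ CF] := chain2_component_add_chain2 (pullback L R).
have mem_N j : N j \in [:: N0; N1].
  by rewrite !inE; case: (ord2_cases j) => ->; rewrite eqxx ?orbT.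
apply/ffunP => -[x y]; change (le_of (add_chain2 (pullback L R)) x y = le_of R x y).
have [xy_N | /norP[x_N y_N]] := boolP ((x \in [:: N0; N1]) || (y \in [:: N0; N1])).
  by rewrite CF // CR.
case: (split_ordP x) x_N => [i|j] -> x_N; last by rewrite mem_N in x_N.
case: (split_ordP y) y_N => [k|l] -> y_N; last by rewrite mem_N in y_N.
by rewrite le_add_chain2E le_pullback.
Qed.

Lemma add_chain2_ess_surj a (t : prel (p + 2)) :
  3 * a <= 2 * p -> t \in H0_labelled (p + 2) a.+1 ->
  exists2 r, r \in H0_labelled p a & poset_iso t (add_chain2 r).
Proof.
move=> arcs_le tH; have := tH; rewrite inE => /and3P[t_poset /eqP t_arcs t_noiso].
have [x [y Cxy]] : exists x y, chain2_component t x y.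
  by apply: exists_chain2_component; rewrite // t_arcs; lia.
have N01 : N0 != N1 by rewrite (inj_eq (@rshift_inj p 2)).
have [s [s0 s1]] := exists_perm2 N01 Cxy.1.
have C' : chain2_component (pullback s t) N0 N1 by apply/chain2_pullback; rewrite s0 s1.
exists (pullback L (pullback s t)).
  by rewrite -add_chain2_H0 (pullback_lshiftK C') pullback_H0.
by rewrite (pullback_lshiftK C'); apply/poset_iso_sym/poset_iso_pullback.
Qed.

End AddChain2.

Lemma H0_add_chain2 p a : 3 * a <= 2 * p -> H0 p a = H0 (p + 2) a.+1.
Proof.
move=> arcs_le; apply: (card_equivalence_partition_transfer (f := @add_chain2 p)).
- exact: poset_iso_equiv.
- exact: poset_iso_equiv.
- by move=> r; rewrite add_chain2_H0.
- by move=> r1 r2 _ _; apply: add_chain2_iso.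
- by move=> t; apply: add_chain2_ess_surj.
Qed.

Theorem lemma6 (n a b : nat) :
  2 * n <= a -> 2 * n <= b -> H0 (2 * a - n) a = H0 (2 * b - n) b.
Proof.
suff H0_const c : 2 * n <= c -> H0 (2 * c - n) c = H0 (2 * (2 * n) - n) (2 * n).
  by move=> /H0_const -> /H0_const ->.
move=> le_c; rewrite -(subnKC le_c); elim: (c - 2 * n) => [|k IH]; first by rewrite addn0.
rewrite addnS -IH (H0_add_chain2 (p := 2 * (2 * n + k) - n)); last by lia.
by congr H0; lia.
Qed.
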